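(* Let $\mathcal M$ be a special local Moufang set with basis $(0,\infty)$, let $\tau$ be a $\mu$-map, let $n\ge1$, and let $x\in X\setminus\overline\infty$ be such that $x\cdot k$ is a unit for all $1\le k\le n$. Then: (i) there is a unique $y\in X\setminus\overline\infty$ with $y\cdot n=x$, denoted $x\cdot\tfrac1n$; (ii) $(x\cdot n)\tau=x\tau\cdot\tfrac1n$ and $(x\cdot\tfrac1n)\tau=x\tau\cdot n$ (in particular $x\tau\cdot k$ is a unit for $1\le k\le n$); (iii) if $z\sim x$, then $z\cdot k$ is a unit for all $1\le k\le n$ and $x\cdot\tfrac1n\sim z\cdot\tfrac1n$.
   Context: Group actions are right actions; $g^h=h^{-1}gh$; permutations composed left to right. For $(X,\sim)$, $\overline x$ is the class of $x$, $\overline X$ the set of classes, $\mathrm{Sym}(X,\sim)$ the bijections $g$ with $x\sim y\iff xg\sim yg$, $\overline U$ the induced group on $\overline X$. A local Moufang set is $(X,\sim)$ with $|\overline X|>2$ and subgroups $U_x\le\mathrm{Sym}(X,\sim)$ ($x\in X$) with: (LM0) $x\sim y\Rightarrow\overline{U_x}=\overline{U_y}$; (LM1) $U_x$ fixes $x$ and is sharply transitive on $X\setminus\overline x$; (LM1') $\overline{U_x}$ fixes $\overline x$ and is sharply transitive on $\overline X\setminus\{\overline x\}$; (LM2) $U_x^g=U_{xg}$ for all $x$ and all $g\in\langle U_y\rangle$. Fix a basis $(0,\infty)$, $0\not\sim\infty$. For $x\not\sim\infty$: $\alpha_x$ is the unique element of $U_\infty$ with $0\alpha_x=x$, $-x:=0\alpha_x^{-1}$,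 and $x\cdot k:=0\alpha_x^k$ for $k\ge1$. A unit is $x$ with $x\not\sim0,\infty$; $\mu_x$ is the unique element of $U_0\alpha_xU_0$ interchanging $0$ and $\infty$; a $\mu$-map is any $\mu_e$, $e$ a unit. $\mathcal M$ is special if $\big(-(x\tau^{-1})\big)\tau=-x$ for all units $x$ and some (equivalently every) $\mu$-map $\tau$. *)

(* A permutation g acting on the right is represented as a function g : X -> X,
   with  "x g"  written  g x ;  the product  g h  (first g then h) is
   fun z => h (g z). *)
From Stdlib Require Import ClassicalEpsilon FunctionalExtensionality PeanoNat.
Set Implicit Arguments.

Section LMS.
Context {X : Type}.

Definition in_Sym (eqv : X -> X -> Prop) (g : X -> X) : Prop :=
  (exists h : X -> X, (forall z, h (g z) = z) /\ (forall z, g (h z) = z)) /\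
  (forall x y, eqv x y <-> eqv (g x) (g y)).

Definition is_subgroup_Sym (eqv : X -> X -> Prop) (P : (X -> X) -> Prop) : Prop :=
  (forall g, P g -> in_Sym eqv g) /\
  P (fun z => z) /\
  (forall g h, P g -> P h -> P (fun z => h (g z))) /\
  (forall g, P g -> exists h, P h /\ (forall z, h (g z) = z) /\ (forall z, g (h z) = z)).

(* every element of the induced group of P on classes is induced by some element of Q *)
Definition bar_incl (eqv : X -> X -> Prop) (P Q : (X -> X) -> Prop) : Prop :=
  forall g, P g -> exists h, Q h /\ forall z, eqv (g z) (h z).

(* the group generated by all U_y  (each U_y is closed under inverses) *)
Inductive gen (U : X -> (X -> X) -> Prop) : (X -> X) -> Prop :=
| gen_id : gen U (fun z => z)
| gen_mul : forall y u g, U y u -> gen U g -> gen U (fun z => u (g z)).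

Definition is_local_moufang (eqv : X -> X -> Prop) (U : X -> (X -> X) -> Prop) : Prop :=
  ((forall x, eqv x x) /\ (forall x y, eqv x y -> eqv y x) /\
   (forall x y z, eqv x y -> eqv y z -> eqv x z)) /\
  (exists a b c, ~ eqv a b /\ ~ eqv a c /\ ~ eqv b c) /\
  (forall x, is_subgroup_Sym eqv (U x)) /\
  (forall x y, eqv x y -> bar_incl eqv (U x) (U y) /\ bar_incl eqv (U y) (U x)) /\
  (forall x, (forall g, U x g -> g x = x) /\
     (forall y z, ~ eqv y x -> ~ eqv z x -> exists! g, U x g /\ g y = z)) /\
  (forall x, (forall g y, U x g -> eqv y x -> eqv (g y) x) /\
     (forall y z, ~ eqv y x -> ~ eqv z x -> exists g, U x g /\ eqv (g y) z) /\
     (forall g h y, U x g -> U x h -> ~ eqv y x -> eqv (g y) (h y) ->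
        forall w, eqv (g w) (h w))) /\
  (* (LM2): U_x^g = U_{xg}, where  g^{-1} u g  acts as  z |-> g (u (g^{-1} z)) *)
  (forall x g ginv, gen U g -> (forall z, ginv (g z) = z) -> (forall z, g (ginv z) = z) ->
     forall v, U (g x) v <-> exists u, U x u /\ v = (fun z => g (u (ginv z)))).

Definition finv (f : X -> X) : X -> X :=
  fun z => epsilon (inhabits z) (fun y => f y = z).

Variables (eqv : X -> X -> Prop) (U : X -> (X -> X) -> Prop) (zero inf : X).

Definition alpha (x : X) : X -> X :=
  epsilon (inhabits (fun z : X => z)) (fun a => U inf a /\ a zero = x).

Definition negp (x : X) : X := finv (alpha x) zero.

Definition mulk (x : X) (k : nat) : X := Nat.iter k (alpha x) zero.

Definition is_unit (x : X) : Prop := ~ eqv x zero /\ ~ eqv x inf.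

Definition mu (x : X) : X -> X :=
  epsilon (inhabits (fun z : X => z))
    (fun m => (exists u1 u2, U zero u1 /\ U zero u2 /\ m = (fun z => u2 (alpha x (u1 z))))
              /\ m zero = inf /\ m inf = zero).

Definition is_mu_map (tau : X -> X) : Prop := exists e, is_unit e /\ tau = mu e.

Definition special : Prop :=
  exists tau, is_mu_map tau /\
    forall x, is_unit x -> tau (negp (finv tau x)) = negp x.

Definition fracn (x : X) (n : nat) : X :=
  epsilon (inhabits x) (fun y => ~ eqv y inf /\ mulk y n = x).

End LMS.

From Pilot Require Import Defs.
From Stdlib Require Import ClassicalEpsilon PeanoNat FunctionalExtensionality Lia Wf_nat.

(* Next to the root elements [alpha y] of [U inf] (with [zero alpha_y = y]) use
   the root elements [beta y] of [U zero] (with [inf beta_y = y]) and the dual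
   multiples [dmulk y k = inf beta_y^k].  An element of the little projective
   group interchanging [zero] and [inf] conjugates [alpha_y] into [beta_(y g)],
   so it maps [mulk y k] to [dmulk (y g) k]; mu-maps are such swaps.
   Specialness says [inf beta_c^-1 = -c], which makes [beta_c^-1 alpha_c beta_c^-1]
   a swap conjugating [beta_c^-1] into [alpha_c]; hence [mulk c k ~ zero] iff
   [dmulk c k ~ inf].

   The heart of the matter is that [dmulk x n] is [x . 1/n], i.e.
   [mulk (dmulk x n) n = x] when [mulk x k] is a unit for [1 <= k <= n], proved by
   strong induction on [n].  For [n = N + 1] put [e = mulk x N] (so [x = dmulk e N]
   by the dual statement, obtained from the induction hypothesis by a swap),
   [d = dmulk x (N+1)] and [v = dmulk e (N+1)].  Then [v] satisfies the hypothesis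
   at level [N] and [dmulk v N = d], so [mulk d N = v]; and [alpha_x] and
   [alpha_d^(N+1)] both map [-d] to [v], hence coincide, giving [x = mulk d (N+1)].
   Uniqueness, part (ii) and part (iii) then follow by transporting along [tau]
   and because a root element fixing one class outside its base fixes all. *)

Lemma finv_eq_inverse {X : Type} (f h : X -> X) :
  (forall z, h (f z) = z) -> (forall z, f (h z) = z) -> forall z, finv f z = h z.
Proof.
  intros hf fh z. unfold finv.
  assert (Hz : exists y, f y = z) by (exists (h z); apply fh).
  pose proof (epsilon_spec (inhabits z) (fun y => f y = z) Hz) as Hspec; simpl in Hspec.
  rewrite <- Hspec at 2. now rewrite hf.
Qed.

Lemma iter_cancel {X : Type} (f g : X -> X) :
  (forall z, g (f z) = z) -> forall k z, Nat.iter k g (Nat.iter k f z) = z.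
Proof.
  intros gf k. induction k as [|k IH]; intro z; [reflexivity|].
  now rewrite Nat.iter_succ_r, Nat.iter_succ, gf, IH.
Qed.

Lemma iter_mul {X : Type} (f : X -> X) a b z :
  Nat.iter (a * b) f z = Nat.iter a (Nat.iter b f) z.
Proof.
  induction a as [|a IH]; [reflexivity|].
  simpl. now rewrite Nat.iter_add, IH.
Qed.

Definition fixes_classes {X : Type} (eqv : X -> X -> Prop) (g : X -> X) :=
  forall w, eqv (g w) w.

Definition root {X : Type} (U : X -> (X -> X) -> Prop) (p q y : X) : X -> X :=
  epsilon (inhabits (fun z : X => z)) (fun a => U p a /\ a q = y).

Section RootGroups.

Context {X : Type} {eqv : X -> X -> Prop} {U : X -> (X -> X) -> Prop}.
Hypothesis HM : is_local_moufang eqv U.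

Lemma eqv_refl x : eqv x x.
Proof. destruct HM as [[h _] _]. apply h. Qed.

Lemma eqv_sym x y : eqv x y -> eqv y x.
Proof. destruct HM as [[_ [h _]] _]. apply h. Qed.

Lemma eqv_trans x y z : eqv x y -> eqv y z -> eqv x z.
Proof. destruct HM as [[_ [_ h]] _]. apply h. Qed.

Lemma not_eqv_sym x y : ~ eqv x y -> ~ eqv y x.
Proof. intros h h'. now apply h, eqv_sym. Qed.

Lemma eqv_not_eqv_trans x y z : eqv x y -> ~ eqv y z -> ~ eqv x z.
Proof. intros Exy Nyz Exz. apply Nyz. exact (eqv_trans _ _ _ (eqv_sym _ _ Exy) Exz). Qed.

Lemma U_subgroup p : is_subgroup_Sym eqv (U p).
Proof. destruct HM as [_ [_ [h _]]]. apply h. Qed.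

Lemma U_fix p g : U p g -> g p = p.
Proof. destruct HM as [_ [_ [_ [_ [h _]]]]]. apply (proj1 (h p)). Qed.

Lemma U_sharply_transitive p y z :
  ~ eqv y p -> ~ eqv z p -> exists! g, U p g /\ g y = z.
Proof. destruct HM as [_ [_ [_ [_ [h _]]]]]. apply (proj2 (h p)). Qed.

Lemma U_eqv_everywhere p g h y :
  U p g -> U p h -> ~ eqv y p -> eqv (g y) (h y) -> forall w, eqv (g w) (h w).
Proof. destruct HM as [_ [_ [_ [_ [_ [h' _]]]]]]. apply (proj2 (proj2 (h' p))). Qed.

Lemma U_conj x g ginv :
  gen U g -> (forall z, ginv (g z) = z) -> (forall z, g (ginv z) = z) ->
  forall u, U x u -> U (g x) (fun z => g (u (ginv z))).
Proof.
  destruct HM as [_ [_ [_ [_ [_ [_ h]]]]]].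
  intros Hg gK Kg u Hu. apply (h x g ginv Hg gK Kg). now exists u.
Qed.

Lemma U_eqv_iff p g : U p g -> forall x y, eqv x y <-> eqv (g x) (g y).
Proof. intro Hg. destruct (U_subgroup p) as [h _]. apply (proj2 (h g Hg)). Qed.

Lemma U_id p : U p (fun z => z).
Proof. apply (U_subgroup p). Qed.

Lemma U_comp p g h : U p g -> U p h -> U p (fun z => h (g z)).
Proof. apply (U_subgroup p). Qed.

Lemma U_iter p g k : U p g -> U p (Nat.iter k g).
Proof.
  intro Hg. induction k as [|k IH]; [apply U_id|].
  exact (U_comp p _ g IH Hg).
Qed.

Lemma U_finv p g : U p g ->
  U p (finv g) /\ (forall z, finv g (g z) = z) /\ (forall z, g (finv g z) = z).
Proof.
  intro Hg. destruct (U_subgroup p) as [_ [_ [_ h]]].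
  destruct (h g Hg) as [k [Hk [gk kg]]].
  replace (finv g) with k; [auto|].
  symmetry. apply functional_extensionality, finv_eq_inverse; assumption.
Qed.

Lemma U_not_eqv p g y : U p g -> ~ eqv y p -> ~ eqv (g y) p.
Proof.
  intros Hg Hy Hgy. rewrite <- (U_fix p g Hg) in Hgy.
  now apply Hy, (U_eqv_iff p g Hg).
Qed.

Lemma U_ext_at p g h y : U p g -> U p h -> ~ eqv y p -> g y = h y -> g = h.
Proof.
  intros Hg Hh Hy E.
  destruct (U_sharply_transitive p y (g y) Hy (U_not_eqv p g y Hg Hy)) as [k [_ Hk]].
  transitivity k; [symmetry|]; apply Hk; auto.
Qed.

Lemma U_fixes_classes p g y : U p g -> ~ eqv y p -> eqv (g y) y -> fixes_classes eqv g.
Proof. intros Hg Hy E w. exact (U_eqv_everywhere p g _ y Hg (U_id p) Hy E w). Qed.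

Lemma iter_fixes_classes g k : fixes_classes eqv g -> fixes_classes eqv (Nat.iter k g).
Proof.
  intros Hg w. induction k as [|k IH]; [apply eqv_refl|].
  eapply eqv_trans; [apply Hg | exact IH].
Qed.

Lemma U_inverse_fixes_class p g h y :
  U p h -> (forall z, h (g z) = z) -> ~ eqv y p -> eqv (h y) y -> eqv (g y) y.
Proof.
  intros Hh hg Hy E. apply eqv_sym.
  rewrite <- (hg y) at 1. exact (U_fixes_classes p h y Hh Hy E (g y)).
Qed.

Lemma iter_eqv (g h : X -> X) :
  (forall w, eqv (g w) (h w)) -> (forall a b, eqv a b -> eqv (g a) (g b)) ->
  forall k w, eqv (Nat.iter k g w) (Nat.iter k h w).
Proof.
  intros E Hg k w. induction k as [|k IH]; [apply eqv_refl|].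
  eapply eqv_trans; [apply Hg, IH | apply E].
Qed.

Lemma gen_eqv_iff g : gen U g -> forall x y, eqv x y <-> eqv (g x) (g y).
Proof.
  induction 1 as [|y u g Hu Hg IH]; intros a b; [tauto|].
  rewrite (IH a b). apply (U_eqv_iff y u Hu).
Qed.

Lemma gen_not_eqv g x y : gen U g -> ~ eqv x y -> ~ eqv (g x) (g y).
Proof. intros Hg h h'. now apply h, (gen_eqv_iff g Hg). Qed.

Lemma root_spec p q y : ~ eqv q p -> ~ eqv y p -> U p (root U p q y) /\ root U p q y q = y.
Proof.
  intros Hq Hy. unfold root.
  destruct (U_sharply_transitive p q y Hq Hy) as [g [Hg _]].
  apply (epsilon_spec (inhabits _) (fun a => U p a /\ a q = y)). now exists g.
Qed.

Lemma root_unique p q g : ~ eqv q p -> U p g -> root U p q (g q) = g.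
Proof.
  intros Hq Hg.
  destruct (root_spec p q (g q) Hq (U_not_eqv p g q Hg Hq)) as [Hr Er].
  exact (U_ext_at p _ _ q Hr Hg Hq Er).
Qed.

Lemma root_iter p q y m : ~ eqv q p -> ~ eqv y p ->
  root U p q (Nat.iter m (root U p q y) q) = Nat.iter m (root U p q y).
Proof.
  intros Hq Hy. apply root_unique; [exact Hq|].
  apply U_iter, (root_spec p q y Hq Hy).
Qed.

Lemma conj_root g ginv p q y :
  gen U g -> (forall z, ginv (g z) = z) -> (forall z, g (ginv z) = z) ->
  g p = q -> g q = p -> ~ eqv q p -> ~ eqv y p ->
  (fun z => g (root U p q y (ginv z))) = root U q p (g y).
Proof.
  intros Hg gK Kg gp gq Hqp Hy.
  destruct (root_spec p q y Hqp Hy) as [Hr Er].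
  assert (HC : U q (fun z => g (root U p q y (ginv z)))).
  { pose proof (U_conj p g ginv Hg gK Kg _ Hr) as H. now rewrite gp in H. }
  assert (gip : ginv p = q) by (rewrite <- gq; apply gK).
  rewrite <- (root_unique q p _ (not_eqv_sym _ _ Hqp) HC), gip, Er. reflexivity.
Qed.

Lemma iter_root_conj g ginv p q y :
  gen U g -> (forall z, ginv (g z) = z) -> (forall z, g (ginv z) = z) ->
  g p = q -> g q = p -> ~ eqv q p -> ~ eqv y p ->
  forall k, g (Nat.iter k (root U p q y) q) = Nat.iter k (root U q p (g y)) p.
Proof.
  intros Hg gK Kg gp gq Hqp Hy k.
  rewrite <- (conj_root g ginv p q y) by assumption.
  rewrite <- gq at 2. apply Nat.iter_swap_gen. intro a. now rewrite gK.
Qed.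

End RootGroups.

Section Basis.

Context {X : Type} {eqv : X -> X -> Prop} {U : X -> (X -> X) -> Prop} {zero inf : X}.
Hypothesis HM : is_local_moufang eqv U.
Hypothesis Hbasis : ~ eqv zero inf.

Local Notation alpha := (Defs.alpha U zero inf).
Local Notation mulk := (Defs.mulk U zero inf).
Local Notation negp := (Defs.negp U zero inf).
Local Notation is_unit := (Defs.is_unit eqv zero inf).
Local Notation fracn := (Defs.fracn eqv U zero inf).

Lemma inf_not_eqv_zero : ~ eqv inf zero.
Proof. exact (not_eqv_sym HM _ _ Hbasis). Qed.

Definition beta y := root U zero inf y.
Definition dmulk y k := Nat.iter k (beta y) inf.

Lemma alpha_spec y : ~ eqv y inf -> U inf (alpha y) /\ alpha y zero = y.
Proof. exact (root_spec HM inf zero y Hbasis). Qed.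

Lemma beta_spec y : ~ eqv y zero -> U zero (beta y) /\ beta y inf = y.
Proof. exact (root_spec HM zero inf y inf_not_eqv_zero). Qed.

Lemma finv_beta_self y : ~ eqv y zero -> finv (beta y) y = inf.
Proof.
  intro Hy. destruct (beta_spec y Hy) as [Hb Eb].
  destruct (U_finv HM zero _ Hb) as [_ [bK _]].
  rewrite <- Eb at 2. apply bK.
Qed.

Lemma mulk_not_eqv_inf y k : ~ eqv y inf -> ~ eqv (mulk y k) inf.
Proof. intro Hy. apply (U_not_eqv HM); [apply (U_iter HM), alpha_spec, Hy | exact Hbasis]. Qed.

Lemma dmulk_not_eqv_zero y k : ~ eqv y zero -> ~ eqv (dmulk y k) zero.
Proof.
  intro Hy. apply (U_not_eqv HM); [apply (U_iter HM), beta_spec, Hy | exact inf_not_eqv_zero].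
Qed.

Lemma mulk_1 y : ~ eqv y inf -> mulk y 1 = y.
Proof. apply alpha_spec. Qed.

Lemma dmulk_1 y : ~ eqv y zero -> dmulk y 1 = y.
Proof. apply beta_spec. Qed.

Lemma alpha_mulk y m : ~ eqv y inf -> alpha (mulk y m) = Nat.iter m (alpha y).
Proof. exact (root_iter HM inf zero y m Hbasis). Qed.

Lemma beta_dmulk y m : ~ eqv y zero -> beta (dmulk y m) = Nat.iter m (beta y).
Proof. exact (root_iter HM zero inf y m inf_not_eqv_zero). Qed.

Lemma mulk_mulk y m j : ~ eqv y inf -> mulk (mulk y m) j = mulk y (j * m).
Proof.
  intro Hy. change (Nat.iter j (alpha (mulk y m)) zero = mulk y (j * m)).
  now rewrite alpha_mulk, <- iter_mul.
Qed.

Lemma dmulk_dmulk y m j : ~ eqv y zero -> dmulk (dmulk y m) j = dmulk y (j * m).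
Proof. intro Hy. unfold dmulk at 1. now rewrite beta_dmulk, <- iter_mul. Qed.

Lemma mulk_eqv y z k : ~ eqv y inf -> eqv z y -> eqv (mulk z k) (mulk y k).
Proof.
  intros Hy Hzy.
  pose proof (eqv_not_eqv_trans HM _ _ _ Hzy Hy) as Hz.
  destruct (alpha_spec z Hz) as [Haz Ez]. destruct (alpha_spec y Hy) as [Hay Ey].
  apply (iter_eqv HM); [|apply (U_eqv_iff HM inf _ Haz)].
  apply (U_eqv_everywhere HM inf _ _ zero Haz Hay Hbasis). now rewrite Ez, Ey.
Qed.

Lemma dmulk_eqv y z k : ~ eqv y zero -> eqv z y -> eqv (dmulk z k) (dmulk y k).
Proof.
  intros Hy Hzy.
  pose proof (eqv_not_eqv_trans HM _ _ _ Hzy Hy) as Hz.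
  destruct (beta_spec z Hz) as [Hbz Ez]. destruct (beta_spec y Hy) as [Hby Ey].
  apply (iter_eqv HM); [|apply (U_eqv_iff HM zero _ Hbz)].
  apply (U_eqv_everywhere HM zero _ _ inf Hbz Hby inf_not_eqv_zero). now rewrite Ez, Ey.
Qed.

Definition units_upto c n := ~ eqv c inf /\ forall k, 1 <= k <= n -> is_unit (mulk c k).

Lemma units_upto_unit c n : 1 <= n -> units_upto c n -> is_unit c.
Proof. intros Hn [Hc Hk]. rewrite <- (mulk_1 c Hc). apply Hk. lia. Qed.

Lemma units_upto_le c n m : m <= n -> units_upto c n -> units_upto c m.
Proof. intros Hm [Hc Hk]. split; [exact Hc|]. intros k Hkm. apply Hk. lia. Qed.

Lemma units_upto_eqv n x z : units_upto x n -> eqv z x -> units_upto z n.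
Proof.
  intros [Hxinf Hx] Hzx. split; [exact (eqv_not_eqv_trans HM _ _ _ Hzx Hxinf)|].
  intros k Hk. pose proof (mulk_eqv x z k Hxinf Hzx) as E. destruct (Hx k Hk) as [H1 H2].
  split; [exact (eqv_not_eqv_trans HM _ _ _ E H1) | exact (eqv_not_eqv_trans HM _ _ _ E H2)].
Qed.

Lemma units_upto_of_mulk_eq n x y :
  units_upto x n -> ~ eqv y inf -> mulk y n = x -> units_upto y n.
Proof.
  intros Hx Hy E. split; [exact Hy|]. intros k Hk. split; [|now apply mulk_not_eqv_inf].
  intro h. destruct (alpha_spec y Hy) as [Ha _].
  pose proof (U_fixes_classes HM inf _ zero (U_iter HM inf _ k Ha) Hbasis h) as Hfix.
  apply (proj1 (proj2 Hx k Hk)). rewrite <- E, mulk_mulk by exact Hy.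
  unfold Defs.mulk. rewrite Nat.mul_comm, iter_mul. exact (iter_fixes_classes HM _ n Hfix zero).
Qed.

Definition is_swap g := gen U g /\ g zero = inf /\ g inf = zero /\
  exists ginv, (forall z, ginv (g z) = z) /\ (forall z, g (ginv z) = z).

Lemma swap_mulk g y k : is_swap g -> ~ eqv y inf -> g (mulk y k) = dmulk (g y) k.
Proof.
  intros [Hg [g0 [ginf [gi [gK Kg]]]]] Hy.
  exact (iter_root_conj HM g gi inf zero y Hg gK Kg ginf g0 Hbasis Hy k).
Qed.

Lemma swap_dmulk g y k : is_swap g -> ~ eqv y zero -> g (dmulk y k) = mulk (g y) k.
Proof.
  intros [Hg [g0 [ginf [gi [gK Kg]]]]] Hy.
  exact (iter_root_conj HM g gi zero inf y Hg gK Kg g0 ginf inf_not_eqv_zero Hy k).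
Qed.

Lemma swap_unit g y : is_swap g -> is_unit y -> is_unit (g y).
Proof.
  intros [Hg [g0 [ginf _]]] [Hy0 Hyinf]. split.
  - rewrite <- ginf. exact (gen_not_eqv HM g _ _ Hg Hyinf).
  - rewrite <- g0. exact (gen_not_eqv HM g _ _ Hg Hy0).
Qed.

Lemma swap_injective g y z : is_swap g -> g y = g z -> y = z.
Proof. intros [_ [_ [_ [gi [gK _]]]]] E. now rewrite <- (gK y), E, gK. Qed.

Lemma mu_is_swap e : is_unit e -> is_swap (mu U zero inf e).
Proof.
  intros [He0 Heinf].
  destruct (alpha_spec e Heinf) as [Ha Ea].
  destruct (U_finv HM inf _ Ha) as [_ [aK Ka]].
  assert (Hneg : ~ eqv (negp e) zero).
  { intro h. apply He0. rewrite <- Ea. apply (eqv_sym HM).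
    apply (U_eqv_iff HM inf _ Ha) in h. unfold Defs.negp in h. now rewrite Ka in h. }
  destruct (beta_spec (negp e) Hneg) as [Hu1 Eu1].
  destruct (root_spec HM zero e inf He0 inf_not_eqv_zero) as [Hu2 Eu2].
  set (P := fun m : X -> X => (exists u1 u2, U zero u1 /\ U zero u2 /\
      m = (fun z => u2 (alpha e (u1 z)))) /\ m zero = inf /\ m inf = zero).
  assert (Hex : exists m, P m).
  { exists (fun z => root U zero e inf (alpha e (beta (negp e) z))). split; [eauto 6|].
    split.
    - now rewrite (U_fix HM zero _ Hu1), Ea.
    - rewrite Eu1. unfold Defs.negp. now rewrite Ka, (U_fix HM zero _ Hu2). }
  destruct (epsilon_spec (inhabits (fun z : X => z)) P Hex)
    as [[v1 [v2 [Hv1 [Hv2 Em]]]] [Ez Ei]].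
  change (is_swap (epsilon (inhabits (fun z : X => z)) P)).
  rewrite Em in Ez, Ei |- *.
  destruct (U_finv HM zero _ Hv1) as [_ [v1K Kv1]].
  destruct (U_finv HM zero _ Hv2) as [_ [v2K Kv2]].
  split; [|split; [exact Ez|split; [exact Ei|]]].
  - exact (gen_mul zero v2 Hv2 (gen_mul inf _ Ha (gen_mul zero v1 Hv1 (gen_id U)))).
  - exists (fun z => finv v1 (finv (alpha e) (finv v2 z))). split; intro z.
    + now rewrite v2K, aK, v1K.
    + now rewrite Kv1, Ka, Kv2.
Qed.

Lemma special_finv_beta :
  special eqv U zero inf -> forall c, is_unit c -> finv (beta c) inf = negp c.
Proof.
  intros [t [[e' [He' ->]] Ht]] c Hc.
  pose proof (mu_is_swap e' He') as Hswap.
  set (t := mu U zero inf e') in *.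
  destruct Hswap as [Hg [t0 [tinf [ti [tK Kt]]]]].
  specialize (Ht c Hc). rewrite (finv_eq_inverse t ti tK Kt) in Ht.
  assert (Hw : ~ eqv (ti c) inf).
  { intro h. apply (proj1 Hc). rewrite <- (Kt c), <- tinf.
    exact (proj1 (gen_eqv_iff HM t Hg _ _) h). }
  destruct (alpha_spec (ti c) Hw) as [Haw _].
  destruct (U_finv HM inf _ Haw) as [_ [_ Kaw]].
  assert (Ebeta : beta c = fun z => t (alpha (ti c) (ti z))).
  { unfold beta. rewrite <- (Kt c) at 1.
    symmetry. exact (conj_root HM t ti inf zero (ti c) Hg tK Kt tinf t0 Hbasis Hw). }
  destruct (beta_spec c (proj1 Hc)) as [Hb _].
  destruct (U_finv HM zero _ Hb) as [_ [bK _]].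
  assert (E : beta c (t (negp (ti c))) = inf).
  { rewrite Ebeta, tK. unfold Defs.negp. now rewrite Kaw. }
  rewrite <- Ht, <- (bK (t _)). now rewrite E.
Qed.

Section Special.

Hypothesis Hsp : special eqv U zero inf.

Definition sigma c z := finv (beta c) (alpha c (finv (beta c) z)).

Lemma sigma_is_swap c : is_unit c -> is_swap (sigma c).
Proof.
  intros Hc. pose proof Hc as [Hc0 Hcinf].
  destruct (beta_spec c Hc0) as [Hb Eb]. destruct (alpha_spec c Hcinf) as [Ha Ea].
  destruct (U_finv HM zero _ Hb) as [Hbi [bK Kb]].
  destruct (U_finv HM inf _ Ha) as [_ [aK Ka]].
  split; [|split; [|split]].
  - exact (gen_mul zero _ Hbi (gen_mul inf _ Ha (gen_mul zero _ Hbi (gen_id U)))).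
  - unfold sigma. now rewrite (U_fix HM zero _ Hbi), Ea, finv_beta_self.
  - unfold sigma. rewrite (special_finv_beta Hsp c Hc). unfold Defs.negp.
    now rewrite Ka, (U_fix HM zero _ Hbi).
  - exists (fun z => beta c (finv (alpha c) (beta c z))). unfold sigma.
    split; intro z; [now rewrite Kb, aK, Kb | now rewrite bK, Ka, bK].
Qed.

(* With [W] and [G] the conjugates of [beta c^-1] and [alpha c] by [sigma c], [W]
   lies in [U inf], [G = beta c^-1] and [sigma c = W G W]; evaluating at [zero]
   gives [W zero = c], so [W = alpha c]. *)
Lemma sigma_finv_beta c w : is_unit c -> sigma c (finv (beta c) w) = alpha c (sigma c w).
Proof.
  intros Hc. pose proof Hc as [Hc0 Hcinf].
  destruct (beta_spec c Hc0) as [Hb Eb]. destruct (alpha_spec c Hcinf) as [Ha Ea].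
  destruct (U_finv HM zero _ Hb) as [Hbi [_ Kb]].
  destruct (sigma_is_swap c Hc) as [Hs [s0 [sinf [si [sK Ks]]]]].
  set (s := sigma c) in *. set (bi := finv (beta c)) in *.
  set (W := fun z => s (bi (si z))).
  assert (HW : U inf W).
  { pose proof (U_conj HM zero s si Hs sK Ks bi Hbi) as H. now rewrite s0 in H. }
  assert (EG : (fun z => s (alpha c (si z))) = bi).
  { change ((fun z => s (root U inf zero c (si z))) = bi).
    rewrite (conj_root HM s si inf zero c Hs sK Ks sinf s0 Hbasis Hcinf).
    assert (Esc : s c = bi inf).
    { unfold s, sigma. now rewrite finv_beta_self, (U_fix HM inf _ Ha). }
    rewrite Esc. exact (root_unique HM zero inf bi inf_not_eqv_zero Hbi). }
  assert (EWGW : forall z, W (bi (W z)) = s z).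
  { intro z. rewrite <- EG. unfold W. rewrite !sK.
    change (s (s (si z)) = s z). now rewrite Ks. }
  assert (EW0 : W zero = c).
  { destruct (U_finv HM inf W HW) as [_ [WK _]].
    assert (E : bi (W zero) = inf).
    { rewrite <- (WK (bi (W zero))), EWGW, s0.
      rewrite <- (U_fix HM inf W HW) at 1. apply WK. }
    now rewrite <- Eb, <- E, Kb. }
  assert (EW : W = alpha c).
  { apply (U_ext_at HM inf W _ zero HW Ha Hbasis). now rewrite EW0, Ea. }
  rewrite <- EW. unfold W. now rewrite sK.
Qed.

Lemma sigma_iter c k :
  is_unit c -> sigma c (Nat.iter k (finv (beta c)) inf) = mulk c k.
Proof.
  intros Hc. destruct (sigma_is_swap c Hc) as [_ [_ [sinf _]]].
  rewrite (Nat.iter_swap_gen _ _ _ _ (alpha c) (fun w => sigma_finv_beta c w Hc)).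
  now rewrite sinf.
Qed.

Lemma mulk_eqv_zero_iff c k : is_unit c -> eqv (mulk c k) zero <-> eqv (dmulk c k) inf.
Proof.
  intros Hc. destruct (sigma_is_swap c Hc) as [Hs [_ [sinf _]]].
  rewrite <- (sigma_iter c k Hc), <- sinf at 1. rewrite <- (gen_eqv_iff HM _ Hs).
  destruct (beta_spec c (proj1 Hc)) as [Hb _].
  destruct (U_finv HM zero _ Hb) as [Hbi [bK Kb]].
  unfold dmulk. split; intro h.
  - exact (U_inverse_fixes_class HM zero _ _ inf (U_iter HM zero _ k Hbi)
             (iter_cancel _ _ bK k) inf_not_eqv_zero h).
  - exact (U_inverse_fixes_class HM zero _ _ inf (U_iter HM zero _ k Hb)
             (iter_cancel _ _ Kb k) inf_not_eqv_zero h).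
Qed.

Lemma dmulk_unit c k : is_unit c -> ~ eqv (mulk c k) zero -> is_unit (dmulk c k).
Proof.
  intros Hc Hk. split; [now apply dmulk_not_eqv_zero, Hc|].
  rewrite <- (mulk_eqv_zero_iff c k Hc). exact Hk.
Qed.

Lemma swap_units_upto g c n : is_swap g -> 1 <= n -> units_upto c n -> units_upto (g c) n.
Proof.
  intros Hg Hn Hc. pose proof (units_upto_unit c n Hn Hc) as Hu.
  split; [exact (proj2 (swap_unit g c Hg Hu))|].
  intros k Hk. rewrite <- (swap_dmulk g c k Hg (proj1 Hu)).
  apply (swap_unit g _ Hg), dmulk_unit; [exact Hu | apply (proj2 Hc k Hk)].
Qed.

(* Transporting by the swap [sigma c] exchanges [mulk] and [dmulk]. *)
Lemma dmulk_mulk_of_mulk_dmulk m c :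
  (forall y, units_upto y m -> mulk (dmulk y m) m = y) ->
  1 <= m -> units_upto c m -> dmulk (mulk c m) m = c.
Proof.
  intros Hroot Hm Hc. pose proof (units_upto_unit c m Hm Hc) as Hu.
  pose proof (sigma_is_swap c Hu) as Hs.
  apply (swap_injective (sigma c)); [exact Hs|].
  assert (Hcm : ~ eqv (mulk c m) zero) by (apply (proj2 Hc m); lia).
  rewrite (swap_dmulk _ _ m Hs Hcm), (swap_mulk _ c m Hs (proj2 Hu)).
  exact (Hroot _ (swap_units_upto _ c m Hs Hm Hc)).
Qed.

Lemma mulk_eqv_zero_cancel m c j : 1 <= m -> units_upto c m -> dmulk (mulk c m) m = c ->
  eqv (mulk c (m * j)) zero -> eqv (mulk c j) zero.
Proof.
  intros Hm Hc Hdual Hmj.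
  pose proof (units_upto_unit c m Hm Hc) as Hu.
  assert (He : is_unit (mulk c m)) by (apply (proj2 Hc); lia).
  rewrite Nat.mul_comm, <- (mulk_mulk c m j (proj2 Hu)), (mulk_eqv_zero_iff _ j He) in Hmj.
  destruct (beta_spec (mulk c m) (proj1 He)) as [Hb _].
  pose proof (U_fixes_classes HM zero _ inf (U_iter HM zero _ j Hb) inf_not_eqv_zero Hmj) as Hfix.
  apply (mulk_eqv_zero_iff c j Hu).
  rewrite <- Hdual, dmulk_dmulk by apply He. unfold dmulk.
  rewrite Nat.mul_comm, iter_mul. exact (iter_fixes_classes HM _ m Hfix inf).
Qed.

Section InductionStep.

Variables (N : nat) (c : X).
Hypothesis IH : forall m y, 1 <= m <= N -> units_upto y m -> mulk (dmulk y m) m = y.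
Hypothesis HN : 1 <= N.
Hypothesis Hc : units_upto c (S N).

Let Hcu : is_unit c := units_upto_unit c (S N) ltac:(lia) Hc.
Let e := mulk c N.
Let d := dmulk c (S N).
Let v := dmulk e (S N).

Lemma step_dual m : 1 <= m <= N -> dmulk (mulk c m) m = c.
Proof.
  intros Hm. apply dmulk_mulk_of_mulk_dmulk; [intros y; apply IH; exact Hm | lia |].
  apply (units_upto_le c (S N)); [lia | exact Hc].
Qed.

Lemma step_cancel m j : 1 <= m <= N -> eqv (mulk c (m * j)) zero -> eqv (mulk c j) zero.
Proof.
  intros Hm. apply (mulk_eqv_zero_cancel m); [lia | | now apply step_dual].
  apply (units_upto_le c (S N)); [lia | exact Hc].
Qed.

Lemma step_e_unit : is_unit e.
Proof. apply (proj2 Hc). lia. Qed.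

Lemma step_v_units_upto : units_upto v N.
Proof.
  assert (Hv : forall k, 1 <= k <= N -> ~ eqv (dmulk v k) inf).
  { intros k Hk h. unfold v in h. rewrite dmulk_dmulk in h by apply step_e_unit.
    apply (mulk_eqv_zero_iff e _ step_e_unit) in h. unfold e in h.
    rewrite mulk_mulk in h by apply Hcu.
    apply (proj1 (proj2 Hc (S N) ltac:(lia))).
    apply (step_cancel k); [lia|]. apply (step_cancel N); [lia|].
    now replace (N * (k * S N)) with (k * S N * N) by lia. }
  assert (Hv0 : ~ eqv v zero) by (apply dmulk_not_eqv_zero, step_e_unit).
  assert (Hvu : is_unit v).
  { split; [exact Hv0|]. rewrite <- (dmulk_1 v Hv0). apply Hv; lia. }
  split; [exact (proj2 Hvu)|]. intros k Hk. split; [|now apply mulk_not_eqv_inf, Hvu].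
  rewrite (mulk_eqv_zero_iff v k Hvu). now apply Hv.
Qed.

Lemma step_dmulk_v : dmulk v N = d.
Proof.
  unfold v, d. rewrite <- (step_dual N) by lia. fold e.
  rewrite !dmulk_dmulk by apply step_e_unit. f_equal. lia.
Qed.

Lemma step_alpha_negp : alpha c (negp d) = v.
Proof.
  destruct (beta_spec c (proj1 Hcu)) as [Hb _].
  destruct (U_finv HM zero _ Hb) as [_ [_ Kb]].
  assert (Ed : negp d = Nat.iter (S N) (finv (beta c)) inf).
  { rewrite <- (special_finv_beta Hsp d).
    2:{ apply dmulk_unit; [exact Hcu | apply (proj2 Hc (S N)); lia]. }
    unfold d. rewrite beta_dmulk by apply Hcu.
    destruct (U_finv HM zero _ (U_iter HM zero _ (S N) Hb)) as [_ [bK _]].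
    rewrite <- (iter_cancel _ _ Kb (S N) inf) at 1. apply bK. }
  rewrite Ed, <- (Kb (alpha c _)), Nat.iter_succ.
  change (beta c (sigma c (Nat.iter N (finv (beta c)) inf)) = v).
  rewrite (sigma_iter c N Hcu). fold e.
  rewrite <- (step_dual N) at 1 by lia. fold e.
  rewrite beta_dmulk by apply step_e_unit. unfold v, dmulk.
  rewrite Nat.iter_succ_r. f_equal. symmetry. apply beta_spec, step_e_unit.
Qed.

Lemma mulk_dmulk_succ : mulk d (S N) = c.
Proof.
  assert (Hd : is_unit d) by (apply dmulk_unit; [exact Hcu | apply (proj2 Hc (S N)); lia]).
  destruct (alpha_spec d (proj2 Hd)) as [Had _].
  destruct (U_finv HM inf _ Had) as [Hadi [_ Kad]].
  destruct (alpha_spec c (proj2 Hcu)) as [Hac Eac].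
  assert (Hneg : ~ eqv (negp d) inf) by exact (U_not_eqv HM inf _ zero Hadi Hbasis).
  assert (E : alpha c = Nat.iter (S N) (alpha d)).
  { apply (U_ext_at HM inf _ _ (negp d) Hac (U_iter HM inf _ _ Had) Hneg).
    rewrite step_alpha_negp, Nat.iter_succ_r. unfold Defs.negp. rewrite Kad.
    rewrite <- step_dmulk_v at 1. symmetry. apply IH; [lia | exact step_v_units_upto]. }
  unfold Defs.mulk. now rewrite <- E.
Qed.

End InductionStep.

Theorem mulk_dmulk n c : 1 <= n -> units_upto c n -> mulk (dmulk c n) n = c.
Proof.
  revert c. induction n as [n IHn] using lt_wf_ind. intros c Hn Hc.
  destruct n as [|[|N]]; [lia| |].
  - pose proof (units_upto_unit c 1 Hn Hc) as [Hc0 Hcinf].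
    now rewrite (dmulk_1 c Hc0), (mulk_1 c Hcinf).
  - apply mulk_dmulk_succ; [| lia | exact Hc].
    intros m y Hm. apply IHn; lia.
Qed.

Lemma dmulk_mulk n c : 1 <= n -> units_upto c n -> dmulk (mulk c n) n = c.
Proof.
  intros Hn. apply dmulk_mulk_of_mulk_dmulk; [|exact Hn].
  intro y. exact (mulk_dmulk n y Hn).
Qed.

Lemma mulk_eq_dmulk n x y :
  1 <= n -> units_upto x n -> ~ eqv y inf -> mulk y n = x -> y = dmulk x n.
Proof.
  intros Hn Hx Hy E. rewrite <- E. symmetry.
  exact (dmulk_mulk n y Hn (units_upto_of_mulk_eq n x y Hx Hy E)).
Qed.

Lemma dmulk_not_eqv_inf n x : 1 <= n -> units_upto x n -> ~ eqv (dmulk x n) inf.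
Proof.
  intros Hn Hx. apply dmulk_unit; [exact (units_upto_unit x n Hn Hx)|].
  apply (proj2 Hx n). lia.
Qed.

Lemma fracn_dmulk n x : 1 <= n -> units_upto x n -> fracn x n = dmulk x n.
Proof.
  intros Hn Hx. unfold Defs.fracn.
  set (P := fun y => ~ eqv y inf /\ mulk y n = x).
  assert (Hex : exists y, P y).
  { exists (dmulk x n). split; [exact (dmulk_not_eqv_inf n x Hn Hx) | exact (mulk_dmulk n x Hn Hx)]. }
  destruct (epsilon_spec (inhabits x) P Hex) as [Hy E].
  exact (mulk_eq_dmulk n x _ Hn Hx Hy E).
Qed.

Lemma fracn_spec n x : 1 <= n -> units_upto x n ->
  ~ eqv (fracn x n) inf /\ mulk (fracn x n) n = x /\
  (forall y, ~ eqv y inf -> mulk y n = x -> y = fracn x n).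
Proof.
  intros Hn Hx. rewrite (fracn_dmulk n x Hn Hx).
  split; [exact (dmulk_not_eqv_inf n x Hn Hx)|].
  split; [exact (mulk_dmulk n x Hn Hx)|].
  intro y. exact (mulk_eq_dmulk n x y Hn Hx).
Qed.

Lemma swap_fracn g n x : is_swap g -> 1 <= n -> units_upto x n ->
  g (mulk x n) = fracn (g x) n /\ g (fracn x n) = mulk (g x) n.
Proof.
  intros Hg Hn Hx. pose proof (units_upto_unit x n Hn Hx) as [Hx0 Hxinf].
  rewrite (fracn_dmulk n x Hn Hx), (fracn_dmulk n (g x) Hn (swap_units_upto g x n Hg Hn Hx)).
  split; [exact (swap_mulk g x n Hg Hxinf) | exact (swap_dmulk g x n Hg Hx0)].
Qed.

Lemma fracn_eqv n x z : 1 <= n -> units_upto x n -> eqv z x -> eqv (fracn x n) (fracn z n).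
Proof.
  intros Hn Hx Hzx. pose proof (units_upto_unit x n Hn Hx) as [Hx0 _].
  rewrite (fracn_dmulk n x Hn Hx), (fracn_dmulk n z Hn (units_upto_eqv n x z Hx Hzx)).
  apply (eqv_sym HM). exact (dmulk_eqv x z n Hx0 Hzx).
Qed.

End Special.

End Basis.

Theorem mainTheorem14 (X : Type) (eqv : X -> X -> Prop) (U : X -> (X -> X) -> Prop)
  (zero inf : X) (tau : X -> X) (n : nat) (x : X) :
  is_local_moufang eqv U ->
  ~ eqv zero inf ->
  special eqv U zero inf ->
  is_mu_map eqv U zero inf tau ->
  1 <= n ->
  ~ eqv x inf ->
  (forall k, 1 <= k <= n -> is_unit eqv zero inf (mulk U zero inf x k)) ->
  (* (i) *)
  (~ eqv (fracn eqv U zero inf x n) inf /\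
   mulk U zero inf (fracn eqv U zero inf x n) n = x /\
   (forall y, ~ eqv y inf -> mulk U zero inf y n = x -> y = fracn eqv U zero inf x n)) /\
  (* (ii) *)
  ((forall k, 1 <= k <= n -> is_unit eqv zero inf (mulk U zero inf (tau x) k)) /\
   tau (mulk U zero inf x n) = fracn eqv U zero inf (tau x) n /\
   tau (fracn eqv U zero inf x n) = mulk U zero inf (tau x) n) /\
  (* (iii) *)
  (forall z, eqv z x ->
     (forall k, 1 <= k <= n -> is_unit eqv zero inf (mulk U zero inf z k)) /\
     eqv (fracn eqv U zero inf x n) (fracn eqv U zero inf z n)).
Proof.
  intros HM Hbasis Hsp [e [He ->]] Hn Hx Hunits.
  pose proof (conj Hx Hunits) as Hmult.
  pose proof (mu_is_swap HM Hbasis e He) as Hswap.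
  split; [|split].
  - exact (fracn_spec HM Hbasis Hsp n x Hn Hmult).
  - split; [apply (swap_units_upto HM Hbasis Hsp _ x n Hswap Hn Hmult)|].
    exact (swap_fracn HM Hbasis Hsp _ n x Hswap Hn Hmult).
  - intros z Hz. split; [apply (units_upto_eqv HM Hbasis n x z Hmult Hz)|].
    exact (fracn_eqv HM Hbasis Hsp n x z Hn Hmult Hz).
Qed.
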